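(* There does not exist a closed (Quillen) model structure on the category $\mathrm{UGph}$ of undirected graphs whose class of weak equivalences is $W_U$.
   Context: An undirected graph $X$ consists of a set of nodes $X(0)$, a set of half-arcs $X(1)$, maps $s,t:X(1)\to X(0)$ and an involution $\iota$ of $X(1)$ with $s\circ\iota=t$ (fixed points allowed); morphisms are pairs of maps on nodes and half-arcs commuting with $s,t,\iota$; $\mathrm{UGph}$ is this category. For $p\ge1$, $c^p_U$ has nodes $\mathbb{Z}/p\mathbb{Z}$ and half-arcs $[n]^\pm$ with $s([n]^+)=[n]$, $t([n]^+)=[n+1]$, $s([n]^-)=[n+1]$, $t([n]^-)=[n]$, $\iota([n]^+)=[n]^-$. A $p$-cycle of $X$ is a morphism $h:c^p_U\to X$; it has backtracking if there is $n$ with $h_1([n+1]^+)=h_1([n]^-)$. $W_U$ is the class of morphisms $f:X\to Y$ such that for every $p\ge1$, $h\mapsto f\circ h$ restricts to a bijection from the set of $p$-cycles of $X$ without backtracking onto the set of $p$-cycles of $Y$ without backtracking. A closed model structure is a triple $(\mathrm{Fib},\mathrm{Cof},W)$ with $W$ satisfying 2-out-of-3 such that $(\mathrm{Fib}\cap W,\mathrm{Cof})$ and $(\mathrm{Fib},\mathrm{Cof}\cap W)$ are weak factorization systems (each class is exactly the maps with the appropriate lifting property against the other, and every map factors as (first class)$\circ$(second class)). *)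

From mathcomp Require Import all_boot.
Set Implicit Arguments. Unset Strict Implicit. Unset Printing Implicit Defensive.

Record UGraph := {
  node : Type;
  harc : Type;
  src : harc -> node;
  tgt : harc -> node;
  inv : harc -> harc;
  inv_invol : forall a, inv (inv a) = a;
  src_inv : forall a, src (inv a) = tgt a
}.

Record hom (X Y : UGraph) := {
  hv : node X -> node Y;
  ha : harc X -> harc Y;
  hom_src : forall a, hv (src a) = src (ha a);
  hom_tgt : forall a, hv (tgt a) = tgt (ha a);
  hom_inv : forall a, ha (inv a) = inv (ha a)
}.

Definition hom_eq (X Y : UGraph) (f g : hom X Y) : Prop :=
  (forall x, hv f x = hv g x) /\ (forall a, ha f a = ha g a).

Definition comp (X Y Z : UGraph) (g : hom Y Z) (f : hom X Y) : hom X Z.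
Proof.
refine {| hv := fun x => hv g (hv f x); ha := fun a => ha g (ha f a) |}.
- by move=> a; rewrite hom_src hom_src.
- by move=> a; rewrite hom_tgt hom_tgt.
- by move=> a; rewrite hom_inv hom_inv.
Defined.

(* The cycle graph c^p_U: nodes Z/pZ (= 'I_p), half-arcs [n]^+ = (n,true),
   [n]^- = (n,false); ordS n is [n+1]. *)
Definition cyc_src p (e : 'I_p * bool) : 'I_p := if e.2 then e.1 else ordS e.1.
Definition cyc_tgt p (e : 'I_p * bool) : 'I_p := if e.2 then ordS e.1 else e.1.
Definition cyc_inv p (e : 'I_p * bool) : 'I_p * bool := (e.1, ~~ e.2).

Definition cycU (p : nat) : UGraph.
Proof.
refine {| node := 'I_p; harc := ('I_p * bool)%type;
          src := @cyc_src p; tgt := @cyc_tgt p; inv := @cyc_inv p |}.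
- by case=> n b; rewrite /cyc_inv /= negbK.
- by case=> n [].
Defined.

Definition backtracking (p : nat) (X : UGraph) (h : hom (cycU p) X) : Prop :=
  exists n : 'I_p, ha h (ordS n, true) = ha h (n, false).

Definition W_U (X Y : UGraph) (f : hom X Y) : Prop :=
  forall p : nat, 0 < p ->
    [/\ (forall h : hom (cycU p) X, ~ backtracking h -> ~ backtracking (comp f h)),
        (forall h h' : hom (cycU p) X, ~ backtracking h -> ~ backtracking h' ->
            hom_eq (comp f h) (comp f h') -> hom_eq h h')
      & (forall k : hom (cycU p) Y, ~ backtracking k ->
            exists2 h : hom (cycU p) X, ~ backtracking h & hom_eq (comp f h) k)].

Definition MorClass := forall X Y : UGraph, hom X Y -> Prop.

Definition llp (A B X Y : UGraph) (i : hom A B) (q : hom X Y) : Prop :=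
  forall (u : hom A X) (v : hom B Y), hom_eq (comp q u) (comp v i) ->
    exists d : hom B X, hom_eq (comp d i) u /\ hom_eq (comp q d) v.

Definition wfs (R L : MorClass) : Prop :=
  [/\ (forall (A B : UGraph) (i : hom A B),
          L A B i <-> (forall (X Y : UGraph) (q : hom X Y), R X Y q -> llp i q)),
      (forall (X Y : UGraph) (q : hom X Y),
          R X Y q <-> (forall (A B : UGraph) (i : hom A B), L A B i -> llp i q))
    & (forall (X Y : UGraph) (f : hom X Y),
          exists (Z : UGraph) (l : hom X Z) (r : hom Z Y),
            [/\ L X Z l, R Z Y r & hom_eq (comp r l) f])].

Definition two_out_of_three (W : MorClass) : Prop :=
  forall (X Y Z : UGraph) (f : hom X Y) (g : hom Y Z),
    (W X Y f -> W Y Z g -> W X Z (comp g f)) /\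
    (W X Y f -> W X Z (comp g f) -> W Y Z g) /\
    (W Y Z g -> W X Z (comp g f) -> W X Y f).

Definition MorInter (P Q : MorClass) : MorClass :=
  fun X Y f => P X Y f /\ Q X Y f.

Definition closed_model_structure (Fib Cof W : MorClass) : Prop :=
  [/\ two_out_of_three W, wfs (MorInter Fib W) Cof & wfs Fib (MorInter Cof W)].

From Pilot Require Import Defs.
From mathcomp Require Import all_boot.

Set Implicit Arguments. Unset Strict Implicit.

(* Factor the map from the edge graph E to
   the terminal graph 1 as a cofibration c : E -> Z followed by a trivial
   fibration q : Z -> 1, and the map from the one-loop graph c^1_U to 1 as a
   trivial cofibration j : c^1_U -> R followed by a fibration.
   - Trivial fibrations are stable under products, so c^1_U x Z -> c^1_U is in
     W_U; comparing the 2-cycles "wind twice around the loop, paired with a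
     there-and-back along z or along iota z" shows iota is the identity on Z.
   - E and Z have no p-cycle without backtracking, so c is in W_U, i.e. c is a
     trivial cofibration; lifting it against the fibration R -> 1 shows that j
     identifies the two half-arcs of the loop, since c does (iota = id on Z).
   - But then j composed with the identity and with the flip of c^1_U agree,
     contradicting injectivity of j on non-backtracking 1-cycles. *)

Definition unitG : UGraph.
Proof.
refine {| node := unit; harc := unit; src := fun _ => tt; tgt := fun _ => tt;
          Defs.inv := id |}; by [].
Defined.

Definition to_unit (X : UGraph) : hom X unitG.
Proof. by refine (@Build_hom X unitG (fun _ => tt) (fun _ => tt) _ _ _). Defined.

Lemma hom_eq_to_unit (X : UGraph) (f g : hom X unitG) : hom_eq f g.
Proof. by split=> x; [case: (hv f x); case: (hv g x) | case: (ha f x); case: (ha g x)]. Qed.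

Definition edgeG : UGraph.
Proof.
refine {| node := bool; harc := bool; src := id; tgt := negb; Defs.inv := negb |}.
- exact: negbK.
- by [].
Defined.

Definition prodG (X Y : UGraph) : UGraph.
Proof.
refine {| node := (node X * node Y)%type; harc := (harc X * harc Y)%type;
          src := fun a => (src a.1, src a.2); tgt := fun a => (tgt a.1, tgt a.2);
          Defs.inv := fun a => (Defs.inv a.1, Defs.inv a.2) |}.
- by case=> a b /=; rewrite !inv_invol.
- by case=> a b /=; rewrite !src_inv.
Defined.

Definition fstG (X Y : UGraph) : hom (prodG X Y) X.
Proof. by refine (@Build_hom (prodG X Y) X fst fst _ _ _). Defined.

Definition sndG (X Y : UGraph) : hom (prodG X Y) Y.
Proof. by refine (@Build_hom (prodG X Y) Y snd snd _ _ _). Defined.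

Definition pairG (A X Y : UGraph) (f : hom A X) (g : hom A Y) : hom A (prodG X Y).
Proof.
refine (@Build_hom A (prodG X Y) (fun x => (hv f x, hv g x))
                   (fun a => (ha f a, ha g a)) _ _ _) => a /=.
- by rewrite !hom_src.
- by rewrite !hom_tgt.
- by rewrite !hom_inv.
Defined.

Lemma pairG_nb (X Y : UGraph) p (f : hom (cycU p) X) (g : hom (cycU p) Y) :
  ~ backtracking f -> ~ backtracking (pairG f g).
Proof. by move=> nb [n /= [eq1 _]]; apply: nb; exists n. Qed.

(* The right class of a weak factorization system, being defined by a right
   lifting property, is stable under base change along X -> 1: if Z -> 1 lies
   in it, so does the projection X x Z -> X. *)
Lemma rlp_stable_product (R L : MorClass) :
  (forall (X Y : UGraph) (q : hom X Y),
      R X Y q <-> (forall (A B : UGraph) (i : hom A B), L A B i -> llp i q)) ->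
  forall (X Z : UGraph) (q : hom Z unitG), R Z unitG q -> R (prodG X Z) X (fstG X Z).
Proof.
move=> R_rlp X Z q qR; apply/R_rlp => A B i iL u v uv.
have [d [di _]] := (R_rlp _ _ q).1 qR A B i iL
                     (Defs.comp (sndG X Z) u) (to_unit B) (hom_eq_to_unit _ _).
exists (pairG v d); split; split=> x //=.
- by move: (di.1 x) (uv.1 x) => /= -> <-; case: (hv u x).
- by move: (di.2 x) (uv.2 x) => /= -> <-; case: (ha u x).
Qed.

Definition cycle_free (X : UGraph) : Prop :=
  forall p, 0 < p -> forall h : hom (cycU p) X, ~ backtracking h -> False.

(* If every half-arc is determined by its source, every cycle backtracks:
   both h([n+1]^+) and h([n]^-) start at h([n+1]). *)
Lemma src_injective_cycle_free (X : UGraph) : injective (@src X) -> cycle_free X.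
Proof.
move=> src_inj p p_gt0 h; apply; exists (Ordinal p_gt0); apply: src_inj.
by rewrite -!hom_src.
Qed.

Lemma unitG_cycle_free : cycle_free unitG.
Proof. by apply: src_injective_cycle_free => [[] []]. Qed.

Lemma edgeG_cycle_free : cycle_free edgeG.
Proof. by apply: src_injective_cycle_free. Qed.

(* Maps in W_U preserve non-backtracking cycles, so they reflect cycle-freeness. *)
Lemma W_U_reflects_cycle_free (X Y : UGraph) (f : hom X Y) :
  W_U f -> cycle_free Y -> cycle_free X.
Proof.
move=> fW Yfree p p_gt0 h nb; have [f_nb _ _] := fW p p_gt0.
exact: (Yfree p p_gt0 _ (f_nb h nb)).
Qed.

(* Between cycle-free graphs, every map is in W_U (the bijections are empty). *)
Lemma W_U_cycle_free (X Y : UGraph) (f : hom X Y) :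
  cycle_free X -> cycle_free Y -> W_U f.
Proof.
move=> Xfree Yfree p p_gt0; split.
- by move=> h /(Xfree p p_gt0).
- by move=> h h' /(Xfree p p_gt0).
- by move=> k /(Yfree p p_gt0).
Qed.

Lemma ord1_eq (x y : 'I_1) : x = y.
Proof. by rewrite (ord1 x) (ord1 y). Qed.

Definition wind (p : nat) : hom (cycU p) (cycU 1).
Proof.
refine (@Build_hom (cycU p) (cycU 1) (fun _ => ord0) (fun a => (ord0, a.2)) _ _ _)
  => a //; exact: ord1_eq.
Defined.

Definition flip : hom (cycU 1) (cycU 1).
Proof.
refine (@Build_hom (cycU 1) (cycU 1) id (fun a => (a.1, ~~ a.2)) _ _ _)
  => a //; exact: ord1_eq.
Defined.

Lemma wind_nb p : ~ backtracking (wind p).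
Proof. by case=> n /= /(congr1 snd). Qed.

Lemma flip_nb : ~ backtracking flip.
Proof. by case=> n /= /(congr1 snd). Qed.

Definition there_and_back (Z : UGraph) (z : harc Z) : hom (cycU 2) Z.
Proof.
refine (@Build_hom (cycU 2) Z (fun n : 'I_2 => if val n == 0 then src z else tgt z)
          (fun a : 'I_2 * bool => if (val a.1 == 0) == a.2 then z else Defs.inv z)
          _ _ _).
- by case=> [[[|[|m]] Hm] [|]] //=; rewrite ?src_inv.
- by case=> [[[|[|m]] Hm] [|]] //=; rewrite -?src_inv ?inv_invol.
- by case=> [[[|[|m]] Hm] [|]] //=; rewrite ?inv_invol.
Defined.

(* If the projection X x Z -> X is in W_U and X has a non-backtracking 2-cycle g,
   then iota is the identity on Z: (g, there-and-back along z) and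
   (g, there-and-back along iota z) are non-backtracking with the same image. *)
Lemma inv_trivial_of_W_U_projection (X Z : UGraph) (g : hom (cycU 2) X) :
  W_U (fstG X Z) -> ~ backtracking g -> forall z : harc Z, Defs.inv z = z.
Proof.
move=> prW g_nb z; have [_ proj_inj _] := prW 2 isT.
have [_ /(_ (Ordinal (isT : 1 < 2), true)) /(congr1 snd)] :=
  proj_inj (pairG g (there_and_back z)) (pairG g (there_and_back (Defs.inv z)))
    (pairG_nb g_nb) (pairG_nb g_nb) (conj (fun _ => erefl) (fun _ => erefl)).
by move=> /= ->; rewrite inv_invol.
Qed.

(* A map in W_U out of the loop c^1_U keeps its two half-arcs apart: otherwise it
   would not distinguish the non-backtracking 1-cycles "identity" and "flip". *)
Lemma W_U_loop_halfarcs_distinct (Y : UGraph) (j : hom (cycU 1) Y) :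
  W_U j -> ha j (ord0, true) <> ha j (ord0, false).
Proof.
move=> jW j_eq; have [_ j_inj _] := jW 1 isT.
have same_image : hom_eq (Defs.comp j (wind 1)) (Defs.comp j flip).
  split=> [x | [n b]] /=; first by rewrite (ord1 x).
  by rewrite (ord1 n); case: b.
by have [_ /(_ (ord0, true)) /(congr1 snd)] :=
  j_inj (wind 1) flip (@wind_nb 1) flip_nb same_image.
Qed.

Definition edge_to_loop : hom edgeG (cycU 1).
Proof.
refine (@Build_hom edgeG (cycU 1) (fun _ => ord0) (fun b => (ord0, b)) _ _ _)
  => a //; exact: ord1_eq.
Defined.

Theorem theorem4p9 :
  ~ exists Fib Cof W : MorClass,
      closed_model_structure Fib Cof W /\
      (forall (X Y : UGraph) (f : hom X Y), W X Y f <-> W_U f).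
Proof.
case=> Fib [Cof [W [[_ [_ trivfib_rlp fact_cof] [acof_llp _ fact_acof]] W_iff]]].
have [R [j [r [jAC rF _]]]] := fact_acof _ _ (to_unit (cycU 1)).
have [Z [c [q [cC qTF _]]]] := fact_cof _ _ (to_unit edgeG).
have Z_free : cycle_free Z.
  exact: W_U_reflects_cycle_free ((W_iff _ _ q).1 qTF.2) unitG_cycle_free.
have Z_inv : forall z : harc Z, Defs.inv z = z.
  have prTF := rlp_stable_product trivfib_rlp (cycU 1) qTF.
  exact: inv_trivial_of_W_U_projection ((W_iff _ _ _).1 prTF.2) (@wind_nb 2).
have cAC : MorInter Cof W c.
  split=> //; apply/W_iff.
  exact: W_U_cycle_free edgeG_cycle_free Z_free.
(* A lift d : Z -> R with d o c = j o edge_to_loop; as c identifies the two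
   half-arcs of the edge, j identifies those of the loop. *)
have [d [dc _]] := (acof_llp _ _ c).1 cAC _ _ _ rF
                     (Defs.comp j edge_to_loop) (to_unit Z) (hom_eq_to_unit _ _).
apply: (W_U_loop_halfarcs_distinct ((W_iff _ _ j).1 jAC.2)).
have c_false : ha c false = ha c true by rewrite -[RHS]Z_inv -(hom_inv c true).
by move: (dc.2 true) (dc.2 false) => /= <- <-; rewrite c_false.
Qed.
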